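(* Let $\Pi$ be an affine PTS with affine invariant $I$, and suppose that the process started at $(\ell_{\mathrm{init}},\mathbf v_{\mathrm{init}})$ terminates almost surely (reaches $\{\ell_t,\ell_f\}$ with probability $1$), where $\ell_{\mathrm{init}}\notin\{\ell_t,\ell_f\}$. Suppose that for every location $\ell\notin\{\ell_t,\ell_f\}$ we are given $\mathbf a_\ell\in\mathbb R^V$, $b_\ell\in\mathbb R$, and set $\mathbf a_{\ell_f}=\mathbf 0$, $b_{\ell_f}=0$, such that: (i) there is $M\in\mathbb R$ with $\mathbf a_\ell\cdot\mathbf v+b_\ell\le M$ for every non-terminal $\ell$ and every $\mathbf v\in I(\ell)$; and (ii) for every transition $\tau=\langle\ell^{\mathrm{src}},\varphi,F_1,\dots,F_k\rangle$ with forks $F_j=\langle\ell^{\mathrm{dst}}_j,p_j,\mathrm{upd}_j\rangle$, $\mathrm{upd}_j(\mathbf v,\mathbf u)=\mathbf Q_j\mathbf v+\mathbf R_j\mathbf u+\mathbf e_j$, letting $J_\tau=\{j:\ell^{\mathrm{dst}}_j\ne\ell_t\}$ and $Q_\tau=\sum_{j\in J_\tau}p_j$, we have $Q_\tau>0$ and, for every $\mathbf v\in I(\ell^{\mathrm{src}})$ with $\mathbf v\models\varphi$, $$Q_\tau^{-1}\sum_{j\in J_\tau}p_j\Big(\mathbf a_{\ell^{\mathrm{dst}}_j}\cdot(\mathbf Q_j\mathbf v+\mathbf R_j\boldsymbol\mu+\mathbf e_j)+b_{\ell^{\mathrm{dst}}_j}-\mathbf a_{\ell^{\mathrm{src}}}\cdot\mathbf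 v-b_{\ell^{\mathrm{src}}}\Big)\ge-\ln Q_\tau,$$ where $\boldsymbol\mu=\mathbb E[\mathbf r]$. Then the function $\theta$ with $\theta(\ell_t,\cdot)=0$, $\theta(\ell_f,\cdot)=1$, $\theta(\ell,\mathbf v)=\exp(\mathbf a_\ell\cdot\mathbf v+b_\ell)$ otherwise is a bounded post fixed point on reachable states, and $\mathrm{vpf}(\ell_{\mathrm{init}},\mathbf v_{\mathrm{init}})\ge\exp(\mathbf a_{\ell_{\mathrm{init}}}\cdot\mathbf v_{\mathrm{init}}+b_{\ell_{\mathrm{init}}})$.
   Context: A probabilistic transition system (PTS) $\Pi$ consists of: a finite set $V$ of program variables (valuations $\mathbf v\in\mathbb R^V$); a finite set $R$ of sampling variables, each $r\in R$ with a probability distribution $\mathcal D(r)$ on $\mathbb R$ with finite mean; $\mathbf r$ denotes the random vector with independent coordinates $\mathbf r[r]\sim\mathcal D(r)$, and $\mathcal U\subseteq\mathbb R^R$ a set with $\Pr[\mathbf r\in\mathcal U]=1$; a finite set $L$ of locations containing an initial location $\ell_{\mathrm{init}}$ and two distinct terminal locations $\ell_t$ (normal termination) and $\ell_f$ (assertion violation); an initial valuation $\mathbf v_{\mathrm{init}}$; and a finite set of transitions $\tau=\langle\ell^{\mathrm{src}},\varphi,F_1,\dots,F_k\rangle$, $\ell^{\mathrm{src}}$ non-terminal, guard $\varphi$, forks $F_j=\langle\ell^{\mathrm{dst}}_j,p_j,\mathrm{upd}_j\rangle$ with $p_j>0$, $\sum_jp_j=1$. For each non-terminal $\ell$ and $\mathbf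 v$ exactly one transition has $\ell^{\mathrm{src}}=\ell$ and $\mathbf v\models\varphi$ (the enabled one). The process: from the current state $(\ell,\mathbf v)$ with $\ell$ non-terminal, take the enabled transition, choose fork $j$ with probability $p_j$, draw a fresh independent copy $\mathbf u$ of $\mathbf r$, move to $(\ell^{\mathrm{dst}}_j,\mathrm{upd}_j(\mathbf v,\mathbf u))$; terminal locations are absorbing. $\mathrm{vpf}(\ell,\mathbf v)$ is the probability of ever reaching $\ell_f$ from $(\ell,\mathbf v)$. $\Pi$ is affine if every guard is a conjunction of affine inequalities in the program variables and every update has the form $\mathrm{upd}(\mathbf v,\mathbf u)=\mathbf Q\mathbf v+\mathbf R\mathbf u+\mathbf e$ with constant matrices $\mathbf Q,\mathbf R$ and constant vector $\mathbf e$. $\mathrm{Reach}$ is the smallest set of states containing $(\ell_{\mathrm{init}},\mathbf v_{\mathrm{init}})$ and closed under taking successors $(\ell^{\mathrm{dst}}_j,\mathrm{upd}_j(\mathbf v,\mathbf u))$ with $\mathbf u\in\mathcal U$ along enabled transitions. An invariant $I$ maps each location $\ell$ to $I(\ell)\subseteq\mathbb R^V$ with $\mathbf v\in I(\ell)$ whenever $(\ell,\mathbf v)\in\mathrm{Reach}$; it is affine if each $I(\ell)$ is a conjunction of affine inequalities. $\mathsf{ptf}$ maps $f$ (with $f(\ell_t,\cdot)=0$, $f(\ell_f,\cdot)=1$) to $\mathsf{ptf}(f)(\ell_f,\mathbf v)=1$, $\mathsf{ptf}(f)(\ell_t,\mathbf v)=0$, and for non-terminal $\ell$, $\mathsf{ptf}(f)(\ell,\mathbf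 v)=\sum_jp_j\mathbb E_{\mathbf r}[f(\ell^{\mathrm{dst}}_j,\mathrm{upd}_j(\mathbf v,\mathbf r))]$ for the enabled transition; a post fixed point on reachable states is $f$ with $f(\sigma)\le\mathsf{ptf}(f)(\sigma)$ for all $\sigma\in\mathrm{Reach}$. *)

From HB Require Import structures.
From mathcomp Require Import all_boot all_order all_algebra.
From mathcomp Require Import all_classical all_reals all_analysis.
From Stdlib Require List.
Set Implicit Arguments. Unset Strict Implicit. Unset Printing Implicit Defensive.
Import Order.TTheory GRing.Theory Num.Theory.
Local Open Scope ring_scope.
Local Open Scope classical_set_scope.

Definition dotv (R : realType) (n : nat) (a v : 'cV[R]_n) : R :=
  \sum_(i < n) a i 0 * v i 0.

Record ineq (R : realType) (nV : nat) := Ineq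
  { i_c : 'cV[R]_nV; i_d : R; i_strict : bool }.

Definition sat (R : realType) (nV : nat) (g : seq (ineq R nV)) (v : 'cV[R]_nV)
  : bool :=
  all (fun c => if i_strict c then dotv (i_c c) v < i_d c
                else dotv (i_c c) v <= i_d c) g.

Record fork (R : realType) (L : Type) (nV nR : nat) := Fork
  { f_dst : L; f_prob : R;
    f_Q : 'M[R]_nV; f_R : 'M[R]_(nV, nR); f_e : 'cV[R]_nV }.

Definition upd (R : realType) (L : Type) (nV nR : nat) (F : fork R L nV nR)
  (v : 'cV[R]_nV) (u : 'cV[R]_nR) : 'cV[R]_nV :=
  f_Q F *m v + f_R F *m u + f_e F.

Record transition (R : realType) (L : Type) (nV nR : nat) := Trans
  { t_src : L; t_guard : seq (ineq R nV); t_forks : seq (fork R L nV nR) }.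

(* an affine PTS (locations are the finType L, program variables 'I_nV,
   sampling variables 'I_nR) *)
Record apts (R : realType) (L : Type) (nV nR : nat) := APTS
  { l_init : L; l_t : L; l_f : L; v_init : 'cV[R]_nV;
    trans : seq (transition R L nV nR) }.

Definition nonterm (R : realType) (L : eqType) (nV nR : nat)
  (Pi : apts R L nV nR) (l : L) : bool :=
  (l != l_t Pi) && (l != l_f Pi).

Definition enabled_list (R : realType) (L : eqType) (nV nR : nat)
  (Pi : apts R L nV nR) (l : L) (v : 'cV[R]_nV) :=
  seq.filter (fun tau => (t_src tau == l) && sat (t_guard tau) v) (trans Pi).

Definition enabled (R : realType) (L : eqType) (nV nR : nat)
  (Pi : apts R L nV nR) (l : L) (v : 'cV[R]_nV) :=
  ohead (enabled_list Pi l v).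

Definition wf_apts (R : realType) (L : eqType) (nV nR : nat)
  (Pi : apts R L nV nR) : Prop :=
  l_t Pi != l_f Pi /\
  (forall tau, List.In tau (trans Pi) ->
     nonterm Pi (t_src tau) /\
     (0 < size (t_forks tau))%N /\
     (forall F, List.In F (t_forks tau) -> 0 < f_prob F) /\
     \sum_(F <- t_forks tau) f_prob F = 1) /\
  (forall l v, nonterm Pi l -> size (enabled_list Pi l v) = 1%N).

(* The random vector r is given by nR real random variables rv i on a
   probability space (Omega, P), mutually independent, each with finite
   mean; its law is the product of the distributions D(r). *)

Definition mutually_independent (d : measure_display) (T : measurableType d)
  (R : realType) (P : probability T R) (n : nat) (X : 'I_n -> T -> R) : Prop :=
  forall A : 'I_n -> set R, (forall i, measurable (A i)) ->
    P (\bigcap_(i in [set: 'I_n]) (X i @^-1` A i)) =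
    (\prod_(i < n) P (X i @^-1` A i))%E.

Definition sampling_ok (d : measure_display) (T : measurableType d)
  (R : realType) (P : probability T R) (n : nat) (X : 'I_n -> T -> R) : Prop :=
  (forall i, measurable_fun [set: T] (X i)) /\
  (forall i, P.-integrable [set: T] (EFin \o X i)) /\
  mutually_independent P X.

Definition rvec (T : Type) (R : realType) (n : nat) (X : 'I_n -> T -> R)
  (w : T) : 'cV[R]_n := \col_i X i w.

Definition mean_vec (d : measure_display) (T : measurableType d)
  (R : realType) (P : probability T R) (n : nat) (X : 'I_n -> T -> R)
  : 'cV[R]_n := \col_i fine ('E_P[X i])%E.

Definition step (R : realType) (L : eqType) (nV nR : nat)
  (Pi : apts R L nV nR) (d : measure_display) (T : measurableType d)
  (P : probability T R) (X : 'I_nR -> T -> R) (ct cf : \bar R)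
  (f : L -> 'cV[R]_nV -> \bar R) (l : L) (v : 'cV[R]_nV) : \bar R :=
  if l == l_f Pi then cf else if l == l_t Pi then ct else
  match enabled Pi l v with
  | Some tau => (\sum_(F <- t_forks tau)
                   (f_prob F)%:E * \int[P]_w f (f_dst F) (upd F v (rvec X w)))%E
  | None => 0%E
  end.

Definition ptf (R : realType) (L : eqType) (nV nR : nat)
  (Pi : apts R L nV nR) (d : measure_display) (T : measurableType d)
  (P : probability T R) (X : 'I_nR -> T -> R) :=
  step Pi P X 0%E 1%E.

Fixpoint reach_f_within (R : realType) (L : eqType) (nV nR : nat)
  (Pi : apts R L nV nR) (d : measure_display) (T : measurableType d)
  (P : probability T R) (X : 'I_nR -> T -> R) (n : nat)
  : L -> 'cV[R]_nV -> \bar R :=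
  match n with
  | 0 => fun l _ => if l == l_f Pi then 1%E else 0%E
  | n.+1 => ptf Pi P X (reach_f_within Pi P X n)
  end.

Fixpoint term_within (R : realType) (L : eqType) (nV nR : nat)
  (Pi : apts R L nV nR) (d : measure_display) (T : measurableType d)
  (P : probability T R) (X : 'I_nR -> T -> R) (n : nat)
  : L -> 'cV[R]_nV -> \bar R :=
  match n with
  | 0 => fun l _ => if (l == l_f Pi) || (l == l_t Pi) then 1%E else 0%E
  | n.+1 => step Pi P X 1%E 1%E (term_within Pi P X n)
  end.

(* vpf(l, v): probability of ever reaching l_f  (limit = sup over n) *)
Definition vpf (R : realType) (L : eqType) (nV nR : nat)
  (Pi : apts R L nV nR) (d : measure_display) (T : measurableType d)
  (P : probability T R) (X : 'I_nR -> T -> R) (l : L) (v : 'cV[R]_nV)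
  : \bar R :=
  ereal_sup [set reach_f_within Pi P X n l v | n in [set: nat]].

Definition term_prob (R : realType) (L : eqType) (nV nR : nat)
  (Pi : apts R L nV nR) (d : measure_display) (T : measurableType d)
  (P : probability T R) (X : 'I_nR -> T -> R) (l : L) (v : 'cV[R]_nV)
  : \bar R :=
  ereal_sup [set term_within Pi P X n l v | n in [set: nat]].

Inductive Reach (R : realType) (L : eqType) (nV nR : nat)
  (Pi : apts R L nV nR) (U : set 'cV[R]_nR) : L -> 'cV[R]_nV -> Prop :=
| Reach_init : Reach Pi U (l_init Pi) (v_init Pi)
| Reach_step : forall l v tau F u,
    Reach Pi U l v -> nonterm Pi l -> enabled Pi l v = Some tau ->
    List.In F (t_forks tau) -> U u ->
    Reach Pi U (f_dst F) (upd F v u).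

Definition is_invariant (R : realType) (L : eqType) (nV nR : nat)
  (Pi : apts R L nV nR) (U : set 'cV[R]_nR) (I : L -> seq (ineq R nV)) : Prop :=
  forall l v, Reach Pi U l v -> sat (I l) v.

Definition theta (R : realType) (L : eqType) (nV nR : nat)
  (Pi : apts R L nV nR) (a : L -> 'cV[R]_nV) (b : L -> R)
  (l : L) (v : 'cV[R]_nV) : \bar R :=
  if l == l_t Pi then 0%E else if l == l_f Pi then 1%E
  else (expR (dotv (a l) v + b l))%:E.

(* theta is a post fixed point: at a non-terminal location the updates are affine in
   the sampled vector, so Jensen's inequality for exp bounds the expected value of theta
   at each successor from below by exp of the affine exponent evaluated at the mean mu;
   the discrete weighted Jensen inequality over the forks that avoid l_t, with weights
   p_j / Q_tau, turns condition (ii) into theta(l, v) <= sum_j p_j E[theta(l_j, upd_j)].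
   With K an upper bound of theta on reachable states, induction on n then gives
     theta + K * P[terminate within n steps] <= P[reach l_f within n steps] + K,
   and almost sure termination from the initial state lets n go to infinity. *)

From HB Require Import structures.
From mathcomp Require Import all_boot all_order all_algebra.
From mathcomp Require Import all_classical all_reals all_analysis.
From mathcomp Require Import measurable_realfun.
From mathcomp Require Import ring lra.
From Stdlib Require List.
Set Implicit Arguments.
Unset Strict Implicit.
Unset Printing Implicit Defensive.
Import Order.TTheory GRing.Theory Num.Theory.
Local Open Scope ring_scope.
Local Open Scope classical_set_scope.

(* Forks and transitions have no decidable equality, so membership in their lists is
   [List.In] rather than [\in]. *)
Section big_In.
Context (A : Type).

Lemma big_In_ind2 {R1 R2 : Type} (rel : R1 -> R2 -> Prop)
    (op1 : R1 -> R1 -> R1) (idx1 : R1) (op2 : R2 -> R2 -> R2) (idx2 : R2)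
    (s : seq A) (Pr : pred A) (f : A -> R1) (g : A -> R2) :
  rel idx1 idx2 ->
  (forall x1 x2 y1 y2, rel x1 x2 -> rel y1 y2 -> rel (op1 x1 y1) (op2 x2 y2)) ->
  (forall F, List.In F s -> Pr F -> rel (f F) (g F)) ->
  rel (\big[op1/idx1]_(F <- s | Pr F) f F) (\big[op2/idx2]_(F <- s | Pr F) g F).
Proof.
move=> rel_idx rel_op; elim: s => [|F s IH] fg; first by rewrite !big_nil.
rewrite !big_cons; case: ifP => PrF; last by apply: IH => G sG; apply: fg; right.
by apply: rel_op; [apply: fg; [left|] | apply: IH => G sG; apply: fg; right].
Qed.

Context (R : realType).

Lemma ler_sum_In (s : seq A) (Pr : pred A) (f g : A -> R) :
  (forall F, List.In F s -> Pr F -> f F <= g F) ->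
  \sum_(F <- s | Pr F) f F <= \sum_(F <- s | Pr F) g F.
Proof. by apply: (big_In_ind2 (rel := <=%R)) => // *; exact: lerD. Qed.

Local Open Scope ereal_scope.

Lemma lee_sum_In (s : seq A) (f g : A -> \bar R) :
  (forall F, List.In F s -> f F <= g F) ->
  \sum_(F <- s) f F <= \sum_(F <- s) g F.
Proof.
move=> fg; apply: (big_In_ind2 (rel := fun x y : \bar R => x <= y)) => //.
- by move=> *; exact: leeD.
- by move=> F sF _; exact: fg.
Qed.

Lemma sume_ge0_In (s : seq A) (f : A -> \bar R) :
  (forall F, List.In F s -> 0 <= f F) -> 0 <= \sum_(F <- s) f F.
Proof.
by move=> f0; apply: le_trans (lee_sum_In (f := fun=> 0) f0); rewrite big1_eq.
Qed.

Lemma ge0_sume_distrr_In (s : seq A) (c : \bar R) (f : A -> \bar R) :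
  0 <= c -> (forall F, List.In F s -> 0 <= f F) ->
  c * \sum_(F <- s) f F = \sum_(F <- s) c * f F.
Proof.
move=> c0 f0.
(* nonnegativity of the partial sums is carried along because [ge0_muleDr] needs it *)
suff [] : 0 <= \sum_(F <- s) f F /\ c * \sum_(F <- s) f F = \sum_(F <- s) c * f F by [].
apply: (big_In_ind2 (rel := fun x y => 0 <= x /\ c * x = y)).
- by rewrite mule0.
- by move=> x1 x2 y1 y2 [x0 <-] [y0 <-]; rewrite adde_ge0// ge0_muleDr.
- by move=> F sF _; split; [exact: f0|].
Qed.

Lemma wsume_affine_le (s : seq A) (p : A -> R) (f g h : A -> \bar R) (k : R) :
  (0 <= k)%R -> (\sum_(F <- s) p F)%R = 1%R ->
  (forall F, List.In F s -> [/\ (0 <= p F)%R, 0 <= f F, 0 <= g F & 0 <= h F]) ->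
  (forall F, List.In F s -> f F + k%:E * g F <= h F + k%:E) ->
  \sum_(F <- s) (p F)%:E * f F + k%:E * \sum_(F <- s) (p F)%:E * g F
    <= \sum_(F <- s) (p F)%:E * h F + k%:E.
Proof.
move=> k0 p_sum nonneg fgh.
have k_sum : k%:E = \sum_(F <- s) (p F)%:E * k%:E.
  by rewrite (eq_bigr _ (fun F _ => esym (EFinM _ _))) sumEFin -mulr_suml p_sum mul1r.
rewrite ge0_sume_distrr_In ?lee_fin//; last first.
  by move=> F /nonneg[p0 _ g0 _]; rewrite mule_ge0 ?lee_fin.
rewrite [in X in _ <= X]k_sum -!big_split /=.
apply: lee_sum_In => F /[dup] /nonneg[p0 f0 g0 h0] /fgh fgh_F.
rewrite muleCA -!ge0_muleDr ?mule_ge0 ?lee_fin//.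
by apply: lee_wpmul2l; rewrite ?lee_fin.
Qed.

End big_In.

(* [step] integrates functions that need not be measurable; for nonnegative integrands
   the integral is the supremum over simple minorants, which still yields the
   monotonicity and superadditivity below. *)
Section ge0_integral_nonmeasurable.
Local Open Scope ereal_scope.
Context d (T : measurableType d) (R : realType) (mu : {measure set T -> \bar R}).
Import HBNNSimple.

Lemma ge0_integral_le (f g : T -> \bar R) :
  (forall x, 0 <= f x) -> (forall x, f x <= g x) ->
  \int[mu]_x f x <= \int[mu]_x g x.
Proof.
move=> f0 fg; have g0 x : 0 <= g x by exact: le_trans (f0 x) (fg x).
rewrite !ge0_integralTE//.
by apply: ereal_sup_le => _ [h hf <-]; exists h => // x; exact: le_trans (hf x) (fg x).
Qed.

Lemma ge0_integral_le_ae (f g : T -> \bar R) :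
  (forall x, 0 <= f x) -> (forall x, 0 <= g x) ->
  {ae mu, forall x, f x <= g x} -> \int[mu]_x f x <= \int[mu]_x g x.
Proof.
move=> f0 g0 [N [mN N0 fgN]].
rewrite [leLHS]ge0_integralTE//; apply: ge_ereal_sup => _ [h hf <-].
pose hN := mul_nnsfun h (indic_nnsfun R (measurableC mN)).
have -> : sintegral mu h = sintegral mu hN.
  rewrite -!integralT_nnsfun; apply: ae_eq_integral => //.
  - by apply/measurable_EFinP; exact: measurable_funPT.
  - by apply/measurable_EFinP; exact: measurable_funPT.
  - exists N; split => // x /= hx; apply: contra_notP hx => /= Nx _.
    by rewrite mindicE mem_set//= mulr1.
rewrite -integralT_nnsfun; apply: ge0_integral_le => [x|x]; first by rewrite lee_fin.
rewrite /hN /= mindicE; case: (pselect (N x)) => Nx; first by rewrite memNset//= mulr0.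
rewrite mem_set//= mulr1; apply: le_trans (hf x) _.
by apply: contra_notP Nx => fgx; apply: fgN.
Qed.

Lemma ge0_integralDZ_ge (f g : T -> \bar R) (k : R) :
  measurable_fun setT f -> (forall x, 0 <= f x) -> (forall x, 0 <= g x) ->
  (0 <= k)%R ->
  \int[mu]_x f x + k%:E * \int[mu]_x g x <= \int[mu]_x (f x + k%:E * g x).
Proof.
move=> mf f0 g0 k0.
have [f_oo|f_fin] := eqVneq (\int[mu]_x f x) +oo.
  have : \int[mu]_x f x <= \int[mu]_x (f x + k%:E * g x).
    by apply: ge0_integral_le => // x; rewrite leeDl// mule_ge0.
  by rewrite f_oo leye_eq => /eqP ->; rewrite leey.
have {f_fin}f_fin : \int[mu]_x f x \is a fin_num.
  by rewrite ge0_fin_numE ?ltey// integral_ge0.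
rewrite addeC -leeBrDr// [X in k%:E * X]ge0_integralTE// -ereal_supZl//; last first.
  by apply/set0P; exists (sintegral mu nnsfun0); exists nnsfun0 => // x; exact: g0.
apply: ge_ereal_sup => _ [_ [h hg <-] <-].
rewrite leeBrDr// -sintegralrM -(integralT_nnsfun mu (scale_nnsfun h k0)).
have mkh : measurable_fun setT (fun x => (k * h x)%:E).
  by apply/measurable_EFinP; apply: measurable_funM => //; exact: measurable_funPT.
rewrite -ge0_integralD//; last by move=> x _; rewrite lee_fin mulr_ge0.
apply: ge0_integral_le => [x|x]; first by rewrite adde_ge0// lee_fin mulr_ge0.
by rewrite addeC leeD2l// EFinM; apply: lee_wpmul2l; [rewrite lee_fin | exact: hg].
Qed.

End ge0_integral_nonmeasurable.

Section ge0_integral_probability.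
Local Open Scope ereal_scope.
Context d (T : measurableType d) (R : realType) (P : probability T R).
Import HBNNSimple.

Lemma ge0_integralDcst_le (f : T -> \bar R) (c : R) :
  (forall x, 0 <= f x) -> (0 <= c)%R ->
  \int[P]_x (f x + c%:E) <= \int[P]_x f x + c%:E.
Proof.
move=> f0 c0.
rewrite [leLHS]ge0_integralTE; last by move=> x; rewrite adde_ge0.
apply: ge_ereal_sup => _ [h hf <-].
pose hc x := maxe ((h x)%:E - c%:E) 0.
have hc0 x : 0 <= hc x by rewrite /hc le_max lexx orbT.
have mhc : measurable_fun setT hc.
  apply: measurable_maxe => //; apply: emeasurable_funB => //.
  by apply/measurable_EFinP; exact: measurable_funPT.
rewrite -integralT_nnsfun; apply: (@le_trans _ _ (\int[P]_x (hc x + c%:E))).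
  apply: ge0_le_integral => //.
  - by move=> x _; rewrite lee_fin.
  - by apply/measurable_EFinP; exact: measurable_funPT.
  - exact: emeasurable_funD.
  - by move=> x _; rewrite -leeBlDr// /hc le_max lexx.
rewrite (ge0_integralD P measurableT (fun x _ => hc0 x) mhc)//.
rewrite integral_cst// (_ : _ [set: T] = 1) ?mule1 ?leeD2r//; last exact: probability_setT.
apply: ge0_integral_le => // x.
by rewrite /hc ge_max f0 andbT leeBlDr//; exact: hf.
Qed.

End ge0_integral_probability.

Lemma expR_tangent_le (R : realType) (m y : R) : expR m * (1 + (y - m)) <= expR y.
Proof.
by have := expR_ge1Dx (y - m); rewrite -(ler_pM2l (expR_gt0 m)) -expRD [m + _]addrC subrK.
Qed.

Section expR_jensen_discrete.
Context (A : Type) (R : realType) (s : seq A) (Pr : pred A) (p x : A -> R).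
Hypothesis p_ge0 : forall F, List.In F s -> 0 <= p F.
Let Q := \sum_(F <- s | Pr F) p F.
Hypothesis Q_gt0 : 0 < Q.

Lemma expR_wmean_le :
  Q * expR (Q^-1 * \sum_(F <- s | Pr F) p F * x F)
    <= \sum_(F <- s | Pr F) p F * expR (x F).
Proof.
set m := Q^-1 * _.
have Qm : Q * m = \sum_(F <- s | Pr F) p F * x F by rewrite mulrA mulfV ?gt_eqF// mul1r.
have tangent_sum : \sum_(F <- s | Pr F) p F * (expR m * (1 + (x F - m))) = Q * expR m.
  rewrite (eq_bigr (fun F => expR m * (1 - m) * p F + expR m * (p F * x F))); last first.
    by move=> F _; ring.
  by rewrite big_split /= -!mulr_sumr -/Q -Qm; ring.
rewrite -tangent_sum; apply: ler_sum_In => F sF _.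
by apply: ler_wpM2l; [exact: p_ge0 | exact: expR_tangent_le].
Qed.

Lemma expR_le_wsum_expR (z : R) :
  - ln Q <= Q^-1 * \sum_(F <- s | Pr F) p F * (x F - z) ->
  expR z <= \sum_(F <- s | Pr F) p F * expR (x F).
Proof.
have -> : Q^-1 * \sum_(F <- s | Pr F) p F * (x F - z) =
          Q^-1 * \sum_(F <- s | Pr F) p F * x F - z.
  rewrite (eq_bigr (fun F => p F * x F - z * p F)); last by move=> F _; ring.
  by rewrite sumrB -mulr_sumr -/Q mulrBr mulrCA mulVf ?gt_eqF// mulr1.
rewrite lerBrDr -(ler_expR (- ln Q + z)) expRD expRN lnK ?posrE// => expR_z_le.
by apply: le_trans expR_wmean_le; rewrite -ler_pdivrMl.
Qed.

End expR_jensen_discrete.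

Section expR_jensen.
Local Open Scope ereal_scope.
Context d (T : measurableType d) (R : realType) (P : probability T R).

Lemma expR_expectation_le (Y : T -> R) : Y \in Lfun P 1 ->
  (expR (fine 'E_P[Y]))%:E <= \int[P]_w (expR (Y w))%:E.
Proof.
move=> YL; set m := fine 'E_P[Y].
pose phi := (cst (expR m * (1 - m)) \+ expR m \o* Y)%R.
have EY : 'E_P[Y] = m%:E by rewrite fineK// expectation_fin_num.
have Ephi : 'E_P[phi] = (expR m)%:E.
  rewrite expectationD; [|exact: Lfun_cst|exact: Lfun_scale].
  by rewrite expectation_cst expectationZl// EY -EFinM -EFinD mulrBr mulr1 subrK.
have phi_le w : (phi w <= expR (Y w))%R.
  apply: le_trans (expR_tangent_le m (Y w)).
  by rewrite /phi /= [(Y w * _)%R]mulrC -mulrDr addrAC -addrA.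
rewrite -Ephi unlock integralE.
apply: le_trans (leeB (lexx _) (integral_ge0 _ (fun w _ => funeneg_ge0 _ w))) _.
rewrite sube0; apply: ge0_integral_le => w; first exact: funepos_ge0.
by rewrite funeposE ge_max !lee_fin expR_ge0 andbT.
Qed.

End expR_jensen.

Section dotv.
Context (R : realType).

Lemma dotvE n (a v : 'cV[R]_n) : dotv a v = (a^T *m v) 0 0.
Proof. by rewrite mxE; apply: eq_bigr => i _; rewrite mxE. Qed.

Lemma dotv0l n (v : 'cV[R]_n) : dotv 0 v = 0.
Proof. by rewrite dotvE trmx0 mul0mx mxE. Qed.

Lemma dotvDr n (a u v : 'cV[R]_n) : dotv a (u + v) = dotv a u + dotv a v.
Proof. by rewrite !dotvE mulmxDr mxE. Qed.

Lemma dotv_mulmx n m (a : 'cV[R]_n) (A : 'M[R]_(n, m)) (u : 'cV[R]_m) :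
  dotv a (A *m u) = dotv (A^T *m a) u.
Proof. by rewrite !dotvE trmx_mul trmxK mulmxA. Qed.

Lemma dotv_upd (L : Type) nV nR (F : fork R L nV nR) (a v : 'cV[R]_nV) u :
  dotv a (upd F v u) = dotv a (f_Q F *m v + f_e F) + dotv ((f_R F)^T *m a) u.
Proof. by rewrite /upd addrAC dotvDr dotv_mulmx. Qed.

End dotv.

Section rvec_expectation.
Local Open Scope ereal_scope.
Context d (T : measurableType d) (R : realType) (P : probability T R).
Context (n : nat) (X : 'I_n -> T -> R).
Hypothesis XL : forall i, X i \in Lfun P 1.

Lemma dotv_rvecE (k : 'cV[R]_n) :
  (fun w => dotv k (rvec X w)) = (\sum_(i < n) (k i 0 \o* X i))%R.
Proof.
by apply/funext => w; rewrite fct_sumE; apply: eq_bigr => i _; rewrite mxE mulrC.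
Qed.

Lemma Lfun_dotv_rvec (k : 'cV[R]_n) : (fun w => dotv k (rvec X w)) \in Lfun P 1.
Proof. by rewrite dotv_rvecE rpred_sum// => i _; exact: Lfun_scale. Qed.

Lemma expectation_dotv_rvec (k : 'cV[R]_n) :
  'E_P[fun w => dotv k (rvec X w)] = (dotv k (mean_vec P X))%:E.
Proof.
rewrite dotv_rvecE (_ : (\sum_(i < n) _)%R =
   (\sum_(Y <- [seq (k i 0 \o* X i)%R | i <- index_enum 'I_n]) Y)%R); last first.
  by rewrite big_map.
rewrite expectation_sum; last first.
  by move=> _ /mapP[i _ ->]; exact: Lfun_scale.
rewrite big_map /dotv -sumEFin; apply: eq_bigr => i _.
by rewrite expectationZl// mxE EFinM fineK ?expectation_fin_num// muleC.
Qed.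

End rvec_expectation.

Lemma ohead_filter_In (A : Type) (p : pred A) (s : seq A) x :
  ohead (seq.filter p s) = Some x -> List.In x s /\ p x.
Proof.
elim: s => [//|y s IH] /=; case: ifP => [py [<-]|_ /IH[sx px]]; first by split; [left|].
by split; [right|].
Qed.

Section apts_facts.
Context (R : realType) (L : eqType) (nV nR : nat) (Pi : apts R L nV nR).

Lemma enabledP l v tau : enabled Pi l v = Some tau ->
  [/\ List.In tau (trans Pi), t_src tau = l & sat (t_guard tau) v].
Proof.
by move=> en; have [? /andP[/eqP ? ?]] := ohead_filter_In en.
Qed.

Hypothesis wf : wf_apts Pi.

Lemma l_t_neq_l_f : l_t Pi != l_f Pi.
Proof. by case: wf. Qed.

Lemma enabled_nonterm l v : nonterm Pi l -> exists tau, enabled Pi l v = Some tau.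
Proof.
case: wf => _ [_ one_enabled] /(one_enabled _ v).
by rewrite /enabled; case: enabled_list => [//|tau s] _; exists tau.
Qed.

Lemma fork_prob_gt0 tau F :
  List.In tau (trans Pi) -> List.In F (t_forks tau) -> 0 < f_prob F.
Proof. by case: wf => _ [forks_ok _] /forks_ok[_ [_ [p_gt0 _]]] /p_gt0. Qed.

Lemma fork_prob_sum tau :
  List.In tau (trans Pi) -> \sum_(F <- t_forks tau) f_prob F = 1.
Proof. by case: wf => _ [forks_ok _] /forks_ok[_ [_ [_ ->]]]. Qed.

Local Open Scope ereal_scope.
Context d (T : measurableType d) (P : probability T R) (X : 'I_nR -> T -> R).

Lemma step_enabled ct cf f l v tau :
  nonterm Pi l -> enabled Pi l v = Some tau ->
  step Pi P X ct cf f l v =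
  \sum_(F <- t_forks tau) (f_prob F)%:E * \int[P]_w f (f_dst F) (upd F v (rvec X w)).
Proof. by case/andP => /negbTE lt /negbTE lf tau_en; rewrite /step lt lf tau_en. Qed.

Lemma step_ge0 ct cf f : 0 <= ct -> 0 <= cf -> (forall l v, 0 <= f l v) ->
  forall l v, 0 <= step Pi P X ct cf f l v.
Proof.
move=> ct0 cf0 f0 l v; rewrite /step; case: ifP => // _; case: ifP => // _.
case tau_en: enabled => [tau|//]; have [tau_in _ _] := enabledP tau_en.
apply: sume_ge0_In => F F_in; apply: mule_ge0.
  by rewrite lee_fin ltW// (fork_prob_gt0 tau_in F_in).
by apply: integral_ge0 => w _; exact: f0.
Qed.

Lemma reach_f_within_ge0 n l v : 0 <= reach_f_within Pi P X n l v.
Proof. by elim: n l v => [|n IH] l v /=; [case: ifP | exact: step_ge0]. Qed.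

Lemma term_within_ge0 n l v : 0 <= term_within Pi P X n l v.
Proof. by elim: n l v => [|n IH] l v /=; [case: ifP | exact: step_ge0]. Qed.

End apts_facts.

Section upd_expectation.
Local Open Scope ereal_scope.
Context d (T : measurableType d) (R : realType) (P : probability T R).
Context (L : Type) (nV nR : nat) (X : 'I_nR -> T -> R).
Hypothesis XL : forall i, X i \in Lfun P 1.
Context (F : fork R L nV nR) (v k : 'cV[R]_nV) (c : R).

Let dotv_updE : (fun w => dotv k (upd F v (rvec X w)) + c)%R =
  (cst (dotv k (f_Q F *m v + f_e F) + c) \+ fun w => dotv ((f_R F)^T *m k) (rvec X w))%R.
Proof. by apply/funext => w; rewrite dotv_upd /= addrAC. Qed.

Lemma Lfun_dotv_upd : (fun w => dotv k (upd F v (rvec X w)) + c)%R \in Lfun P 1.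
Proof. by rewrite dotv_updE rpredD ?Lfun_cst ?Lfun_dotv_rvec. Qed.

Lemma expectation_dotv_upd :
  'E_P[fun w => dotv k (upd F v (rvec X w)) + c]%R =
  (dotv k (upd F v (mean_vec P X)) + c)%:E.
Proof.
rewrite dotv_updE expectationD ?Lfun_cst ?Lfun_dotv_rvec//.
by rewrite expectation_cst expectation_dotv_rvec// dotv_upd -EFinD addrAC.
Qed.

End upd_expectation.

Section theta.
Context (R : realType) (L : eqType) (nV nR : nat) (Pi : apts R L nV nR).
Context (a : L -> 'cV[R]_nV) (b : L -> R).
Local Notation theta := (theta Pi a b).

Lemma theta_ge0 l v : (0 <= theta l v)%E.
Proof. by rewrite /theta; do 2?case: ifP => _ //; rewrite lee_fin expR_ge0. Qed.

Hypotheses (a_lf : a (l_f Pi) = 0) (b_lf : b (l_f Pi) = 0).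

Lemma theta_exp l v : l != l_t Pi -> theta l v = (expR (dotv (a l) v + b l))%:E.
Proof.
move=> /negbTE lt; rewrite /theta lt; case: eqP => [->|//].
by rewrite a_lf b_lf dotv0l addr0 expR0.
Qed.

Context d (T : measurableType d) (P : probability T R) (X : 'I_nR -> T -> R).
Hypothesis XL : forall i, X i \in Lfun P 1.

Lemma measurable_theta_upd F v :
  measurable_fun setT (fun w => theta (f_dst F) (upd F v (rvec X w))).
Proof.
have [dst_t|dst_nt] := eqVneq (f_dst F) (l_t Pi).
  by under eq_fun do rewrite /theta dst_t eqxx; exact: measurable_cst.
under eq_fun do rewrite theta_exp//.
apply/measurable_EFinP/(measurableT_comp (f := expR)); first exact: measurable_expR.
apply/measurable_EFinP.
exact/(measurable_int P)/Lfun1_integrable/Lfun_dotv_upd.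
Qed.

Lemma expR_upd_mean_le_integral_theta F v : f_dst F != l_t Pi ->
  ((expR (dotv (a (f_dst F)) (upd F v (mean_vec P X)) + b (f_dst F)))%:E
   <= \int[P]_w theta (f_dst F) (upd F v (rvec X w)))%E.
Proof.
move=> dst_nt; under eq_integral do rewrite theta_exp//.
have := expR_expectation_le (Lfun_dotv_upd XL F v (a (f_dst F)) (b (f_dst F))).
by rewrite expectation_dotv_upd.
Qed.

End theta.

Lemma ge0_integral_affine_le_ae d (T : measurableType d) (R : realType)
    (P : probability T R) (f g h : T -> \bar R) (k c : R) :
  measurable_fun setT f -> (forall x, 0 <= f x)%E -> (forall x, 0 <= g x)%E ->
  (forall x, 0 <= h x)%E -> 0 <= k -> 0 <= c ->
  {ae P, forall x, f x + k%:E * g x <= h x + c%:E}%E ->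
  (\int[P]_x f x + k%:E * \int[P]_x g x <= \int[P]_x h x + c%:E)%E.
Proof.
move=> mf f0 g0 h0 k0 c0 fgh.
apply: le_trans (ge0_integralDZ_ge P mf f0 g0 k0) _.
apply: le_trans _ (ge0_integralDcst_le P h0 c0).
apply: ge0_integral_le_ae fgh => x; first by rewrite adde_ge0// mule_ge0.
by rewrite adde_ge0// lee_fin.
Qed.

Section main.
Context (R : realType) (L : eqType) (nV nR : nat) (Pi : apts R L nV nR).
Context d (T : measurableType d) (P : probability T R) (X : 'I_nR -> T -> R).
Context (U : set 'cV[R]_nR) (I : L -> seq (ineq R nV)).
Context (a : L -> 'cV[R]_nV) (b : L -> R) (M : R).
Hypothesis wf : wf_apts Pi.
Hypothesis XL : forall i, X i \in Lfun P 1.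
Hypothesis mU : measurable (rvec X @^-1` U).
Hypothesis PU : P (rvec X @^-1` U) = 1%E.
Hypothesis inv : is_invariant Pi U I.
Hypotheses (a_lf : a (l_f Pi) = 0) (b_lf : b (l_f Pi) = 0).
Hypothesis exponent_le : forall l v, nonterm Pi l -> sat (I l) v ->
  dotv (a l) v + b l <= M.
Hypothesis transition_ok : forall tau, List.In tau (trans Pi) ->
  let Qt := \sum_(F <- t_forks tau | f_dst F != l_t Pi) f_prob F in
  0 < Qt /\
  forall v, sat (I (t_src tau)) v -> sat (t_guard tau) v ->
    Qt^-1 * \sum_(F <- t_forks tau | f_dst F != l_t Pi)
        f_prob F * (dotv (a (f_dst F))
                       (f_Q F *m v + f_R F *m mean_vec P X + f_e F)
                    + b (f_dst F) - dotv (a (t_src tau)) v - b (t_src tau))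
    >= - ln Qt.

Local Notation theta := (theta Pi a b).
Local Notation reach_f := (reach_f_within Pi P X).
Local Notation term := (term_within Pi P X).

Let K := Num.max (expR M) 1.
Let K_gt0 : 0 < K. Proof. by rewrite lt_max ltr01 orbT. Qed.

Lemma theta_le_bound l v : Reach Pi U l v -> (theta l v <= K%:E)%E.
Proof.
move=> lv_reach; rewrite /theta.
case: ifP => lt; first by rewrite lee_fin ltW.
case: ifP => lf; first by rewrite lee_fin le_max lexx orbT.
rewrite lee_fin le_max ler_expR exponent_le ?inv//.
by rewrite /nonterm lt lf.
Qed.

Lemma theta_le_ptf l v : Reach Pi U l v -> (theta l v <= ptf Pi P X theta l v)%E.
Proof.
move=> lv_reach.
have [->|lf] := eqVneq l (l_f Pi).
  by rewrite /ptf /step /theta eqxx eq_sym (negbTE (l_t_neq_l_f wf)).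
have [->|lt] := eqVneq l (l_t Pi).
  by rewrite /ptf /step /theta eqxx (negbTE (l_t_neq_l_f wf)).
have l_nt : nonterm Pi l by rewrite /nonterm lt lf.
have [tau tau_en] := enabled_nonterm wf v l_nt.
have [tau_in src guard] := enabledP tau_en.
have [Q_gt0 /(_ v) drift] := transition_ok tau_in.
have p_ge0 F : List.In F (t_forks tau) -> 0 <= f_prob F.
  by move=> F_in; exact/ltW/(fork_prob_gt0 wf tau_in F_in).
rewrite /ptf (step_enabled P X _ _ _ l_nt tau_en) theta_exp//.
set x := fun F => dotv (a (f_dst F)) (upd F v (mean_vec P X)) + b (f_dst F).
apply: (@le_trans _ _
  (\sum_(F <- t_forks tau | f_dst F != l_t Pi) f_prob F * expR (x F))%:E).
  rewrite lee_fin (expR_le_wsum_expR p_ge0 Q_gt0)// -src.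
  under [X in _ <= _ * X]eq_bigr do rewrite opprD addrA.
  by apply: (drift _ guard); rewrite src inv.
rewrite big_mkcond -sumEFin; apply: lee_sum_In => F F_in /=.
case: ifP => dst_nt.
  by rewrite EFinM lee_wpmul2l ?lee_fin ?p_ge0// expR_upd_mean_le_integral_theta.
by rewrite mule_ge0 ?lee_fin ?p_ge0// integral_ge0// => w _; exact: theta_ge0.
Qed.

Let ae_U : {ae P, forall w, U (rvec X w)}.
Proof.
exists (~` (rvec X @^-1` U)); split => //; first exact: measurableC.
by rewrite probability_setC// PU subee.
Qed.

Lemma integral_theta_term_le n F v :
  (forall u, U u -> theta (f_dst F) (upd F v u) + K%:E * term n (f_dst F) (upd F v u)
                    <= reach_f n (f_dst F) (upd F v u) + K%:E)%E ->
  (\int[P]_w theta (f_dst F) (upd F v (rvec X w))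
     + K%:E * \int[P]_w term n (f_dst F) (upd F v (rvec X w))
   <= \int[P]_w reach_f n (f_dst F) (upd F v (rvec X w)) + K%:E)%E.
Proof.
move=> le_on_U; apply: ge0_integral_affine_le_ae; rewrite ?ltW//.
- exact: measurable_theta_upd.
- by move=> w; exact: theta_ge0.
- by move=> w; exact: term_within_ge0.
- by move=> w; exact: reach_f_within_ge0.
- by apply: filterS ae_U => w; exact: le_on_U.
Qed.

Lemma theta_term_within_le n l v : Reach Pi U l v ->
  (theta l v + K%:E * term n l v <= reach_f n l v + K%:E)%E.
Proof.
elim: n l v => [|n IH] l v lv_reach /=.
  have [->|lf] := eqVneq l (l_f Pi).
    by rewrite /theta eq_sym (negbTE (l_t_neq_l_f wf)) eqxx mule1.
  have [->|lt] := eqVneq l (l_t Pi); first by rewrite /theta eqxx mule1.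
  by rewrite mule0 adde0 add0e theta_le_bound.
have [->|lf] := eqVneq l (l_f Pi).
  by rewrite /ptf /step /theta eqxx eq_sym (negbTE (l_t_neq_l_f wf)) mule1.
have [->|lt] := eqVneq l (l_t Pi).
  by rewrite /ptf /step /theta eqxx (negbTE (l_t_neq_l_f wf)) mule1.
have l_nt : nonterm Pi l by rewrite /nonterm lt lf.
have [tau tau_en] := enabled_nonterm wf v l_nt.
have [tau_in _ _] := enabledP tau_en.
apply: le_trans (leeD2r _ (theta_le_ptf lv_reach)) _.
rewrite /ptf !(step_enabled P X _ _ _ l_nt tau_en).
apply: wsume_affine_le (fork_prob_sum wf tau_in) _ _ => [|F F_in|F F_in].
- exact: ltW.
- split; first exact/ltW/(fork_prob_gt0 wf tau_in F_in).
  + by apply: integral_ge0 => w _; exact: theta_ge0.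
  + by apply: integral_ge0 => w _; exact: term_within_ge0.
  + by apply: integral_ge0 => w _; exact: reach_f_within_ge0.
- apply: integral_theta_term_le => u Uu; apply: IH.
  exact: Reach_step lv_reach l_nt tau_en F_in Uu.
Qed.

Local Notation li := (l_init Pi).
Local Notation vi := (v_init Pi).

Lemma expR_init_le_vpf : nonterm Pi li -> term_prob Pi P X li vi = 1%E ->
  ((expR (dotv (a li) vi + b li))%:E <= vpf Pi P X li vi)%E.
Proof.
move=> /andP[init_nt _] term1; apply/lee_addgt0Pr => e e_gt0.
have /ereal_sup_gt[_ [n _ <-] tn_gt] : ((1 - e / K)%:E < term_prob Pi P X li vi)%E.
  by rewrite term1 lte_fin gtrBl divr_gt0.
have tn_le1 : (term n li vi <= 1)%E by rewrite -term1; apply: ereal_sup_ubound; exists n.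
have reach_le : (reach_f n li vi <= vpf Pi P X li vi)%E by apply: ereal_sup_ubound; exists n.
have tn_fin : term n li vi \is a fin_num.
  by rewrite ge0_fin_numE ?term_within_ge0// (le_lt_trans tn_le1) ?ltey.
have := theta_term_within_le n (Reach_init Pi U).
rewrite theta_exp// -(fineK tn_fin) -EFinM => init_le.
move: tn_gt; rewrite -(fineK tn_fin) lte_fin; set t := fine _ => tn_gt.
apply: le_trans (_ : _ <= reach_f n li vi + (K - K * t)%:E)%E _.
  by rewrite EFinB addeA leeBrDr.
apply: leeD => //; rewrite lee_fin.
have := tn_gt; rewrite -(ltr_pM2l K_gt0) mulrBr mulr1 mulrCA mulfV ?gt_eqF// mulr1.
lra.
Qed.

End main.

Theorem mainTheorem12 (R : realType) (L : finType) (nV nR : nat)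
  (Pi : apts R L nV nR)
  (d : measure_display) (T : measurableType d) (P : probability T R)
  (X : 'I_nR -> T -> R) (U : set 'cV[R]_nR)
  (I : L -> seq (ineq R nV)) (a : L -> 'cV[R]_nV) (b : L -> R) :
  wf_apts Pi ->
  sampling_ok P X ->
  measurable (rvec X @^-1` U) -> P (rvec X @^-1` U) = 1%E ->
  is_invariant Pi U I ->
  nonterm Pi (l_init Pi) ->
  term_prob Pi P X (l_init Pi) (v_init Pi) = 1%E ->
  a (l_f Pi) = 0 -> b (l_f Pi) = 0 ->
  (exists M : R, forall l v, nonterm Pi l -> sat (I l) v ->
      dotv (a l) v + b l <= M) ->
  (forall tau, List.In tau (trans Pi) ->
     let Qt := \sum_(F <- t_forks tau | f_dst F != l_t Pi) f_prob F in
     0 < Qt /\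
     forall v, sat (I (t_src tau)) v -> sat (t_guard tau) v ->
       Qt^-1 * \sum_(F <- t_forks tau | f_dst F != l_t Pi)
           f_prob F * (dotv (a (f_dst F))
                          (f_Q F *m v + f_R F *m mean_vec P X + f_e F)
                       + b (f_dst F) - dotv (a (t_src tau)) v - b (t_src tau))
       >= - ln Qt) ->
  (exists M : R, forall l v, Reach Pi U l v -> (theta Pi a b l v <= M%:E)%E) /\
  (forall l v, Reach Pi U l v ->
     (theta Pi a b l v <= ptf Pi P X (theta Pi a b) l v)%E) /\
  ((expR (dotv (a (l_init Pi)) (v_init Pi) + b (l_init Pi)))%:E
     <= vpf Pi P X (l_init Pi) (v_init Pi))%E.
Proof.
move=> wf [_ [X_int _]] mU PU inv init_nt term1 a_lf b_lf [M exponent_le] transition_ok.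
have XL i : X i \in Lfun P 1 by exact/Lfun1_integrable.
split; first by exists (Num.max (expR M) 1); exact: theta_le_bound inv exponent_le.
split; first exact: theta_le_ptf wf XL inv a_lf b_lf transition_ok.
exact: expR_init_le_vpf wf XL mU PU inv a_lf b_lf exponent_le transition_ok init_nt term1.
Qed.
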